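(* Let $\tau>3$. For Lebesgue-almost every $\gamma\in(0,\tfrac12)$ the following holds. Let $\alpha\in D_{\gamma,\tau}$ with partial quotients $a_1,a_2,\dots$ and convergents $p_n/q_n$, and suppose that for infinitely many even $n$, $$\frac{p_n}{q_n}+\frac{\gamma}{q_n^{\tau+1}}>\frac{p_{n+2}}{q_{n+2}}-\frac{\gamma}{q_{n+2}^{\tau+1}}.$$ Then for every $\varepsilon>0$ (arbitrarily small) there exists $C>0$ such that $a_{n+2}\le C\,q_n^{2+\varepsilon}$ for these $n$.
   Context: For $x\in\mathbb{R}$, $\|x\|:=\min_{p\in\mathbb{Z}}|x-p|$; $\mathbb{N}=\{1,2,\dots\}$. For $\gamma>0,\tau\ge1$, $D_{\gamma,\tau}:=\{\alpha\in(0,1): \|q\alpha\|\ge\gamma/q^\tau\ \forall q\in\mathbb{N}\}$; its elements are irrational. For irrational $\alpha\in(0,1)$ write $\alpha=\cfrac{1}{a_1+\cfrac{1}{a_2+\cdots}}$ (partial quotients $a_n\in\mathbb{N}$), and let $p_n/q_n$ ($n\ge0$) be its convergents: $p_{-1}=1,q_{-1}=0,p_0=0,q_0=1$, $p_n=a_np_{n-1}+p_{n-2}$, $q_n=a_nq_{n-1}+q_{n-2}$. *)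

From HB Require Import structures.
From mathcomp Require Import all_boot all_order all_algebra.
From mathcomp Require Import all_classical all_reals all_analysis.
Set Implicit Arguments. Unset Strict Implicit. Unset Printing Implicit Defensive.
Import Order.TTheory GRing.Theory Num.Theory.
Local Open Scope ring_scope.

Section CF.
Variable R : realType.

(* D_{gamma,tau}: alpha in (0,1) with ||q alpha|| >= gamma / q^tau for all q >= 1,
   where ||x|| = min_{p in Z} |x - p|; "min_p |x-p| >= c" is written as
   "forall p : int, |x - p| >= c". *)
Definition Dgt (gamma tau : R) : set R :=
  [set alpha | 0 < alpha < 1 /\
     forall (q : nat) (p : int), (0 < q)%N ->
       gamma / (q%:R `^ tau) <= `|q%:R * alpha - p%:~R| ].

Definition gauss (x : R) : R := x^-1 - (Num.floor x^-1)%:~R.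

Definition cf_rem (alpha : R) (n : nat) : R := iter n gauss alpha.

(* partial quotients: a_n = floor (1 / x_{n-1}) for n >= 1 (a_0 := 0). *)
Definition pq (alpha : R) (n : nat) : int :=
  match n with 0 => 0 | m.+1 => Num.floor (cf_rem alpha m)^-1 end.

(* convergent recursion: returns ((p_{n-1}, q_{n-1}), (p_n, q_n)). *)
Fixpoint conv_aux (a : nat -> int) (n : nat) : (int * int) * (int * int) :=
  match n with
  | 0 => ((1, 0), (0, 1))
  | m.+1 => let: ((pp, qq), (p, q)) := conv_aux a m in
            ((p, q), (a m.+1 * p + pp, a m.+1 * q + qq))
  end.

Definition cf_p (alpha : R) (n : nat) : int := (conv_aux (pq alpha) n).2.1.
Definition cf_q (alpha : R) (n : nat) : int := (conv_aux (pq alpha) n).2.2.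

End CF.

From HB Require Import structures.
From mathcomp Require Import all_boot all_order all_algebra.
From mathcomp Require Import all_classical all_reals all_analysis.
From mathcomp Require Import zify ring lra.
Set Implicit Arguments.
Unset Strict Implicit.
Unset Printing Implicit Defensive.
Import Order.TTheory GRing.Theory Num.Theory.
Local Open Scope ring_scope.

(* For even n the determinant identity p_{n+1} q_n - p_n q_{n+1} = 1 gives
   p_{n+2}/q_{n+2} - p_n/q_n = a_{n+2}/(q_n q_{n+2}), so overlapping gamma-neighbourhoods
   force q_n^tau/gamma - q_{n+1} < 2 q_n/a_{n+2}, while the Diophantine condition and
   |q_n alpha - p_n| <= 1/q_{n+1} give q_{n+1} <= q_n^tau/gamma.  Hence if
   a_{n+2} > 2 q_n^(2+e), then K/gamma, where K = q_n^tau, lies less than q_n^-(1+e) above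
   the integer q_{n+1} >= 2K.  For a fixed value Q of q_n these gamma form a union of
   intervals [K/(N+d), K/N], N >= 2K, of total length at most d = Q^-(1+e), which is
   summable in Q.  By Borel-Cantelli almost every gamma lies in only finitely many of these
   sets, for every e = 1/(j+1); for such gamma the bound a_{n+2} <= 2 q_n^(2+e) holds once
   q_n is large, and the finitely many remaining n are absorbed into the constant. *)

Section Convergents.
Variable a : nat -> int.
Local Notation p n := (conv_aux a n).2.1.
Local Notation q n := (conv_aux a n).2.2.

Lemma conv_auxSS n :
  (conv_aux a n.+2).2 = (a n.+2 * p n.+1 + p n, a n.+2 * q n.+1 + q n).
Proof. by rewrite /=; case: (conv_aux a n) => [[? ?] [? ?]]. Qed.

Lemma conv_pSS n : p n.+2 = a n.+2 * p n.+1 + p n.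
Proof. by rewrite conv_auxSS. Qed.

Lemma conv_qSS n : q n.+2 = a n.+2 * q n.+1 + q n.
Proof. by rewrite conv_auxSS. Qed.

Lemma conv_det n : p n * q n.+1 - p n.+1 * q n = (-1) ^+ n.+1.
Proof.
elim: n => [|n IH]; first by rewrite /=; ring.
by rewrite conv_pSS conv_qSS exprS -IH; ring.
Qed.

Hypothesis a_ge1 : forall m, 1 <= a m.+1.

Lemma conv_q_ge n : 1 <= q n /\ n%:Z <= q n.
Proof.
suff [] : (1 <= q n /\ n%:Z <= q n) /\ (1 <= q n.+1 /\ n.+1%:Z <= q n.+1) by [].
elim: n => [|n [[q0 _] [q1 qn1]]].
  by have := a_ge1 0; rewrite /= mulr1 addr0; split; [split|split].
by rewrite conv_qSS; have := a_ge1 n.+1; do !split => //; nia.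
Qed.

End Convergents.

Section GaussMap.
Variable R : realType.
Implicit Type x : R.

Lemma gauss_ge0_lt1 x : 0 <= gauss x < 1.
Proof.
rewrite /gauss subr_ge0 ltrBlDl floor_le /=.
by have := floorD1_gt x^-1; rewrite intrD addrC.
Qed.

Lemma gauss_invE x : x^-1 = (Num.floor x^-1)%:~R + gauss x.
Proof. by rewrite /gauss addrC subrK. Qed.

Definition irrational x : Prop := forall r : rat, x != ratr r.

Lemma irrational_neq0 x : irrational x -> x != 0.
Proof. by move=> /(_ 0); rewrite rmorph0. Qed.

Lemma irrational_gauss x : irrational x -> irrational (gauss x).
Proof.
move=> x_irr r; apply: contraTneq (x_irr ((Num.floor x^-1)%:~R + r)^-1) => gx.
by rewrite fmorphV rmorphD /= ratr_int -gx -gauss_invE invrK negbK.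
Qed.

End GaussMap.

Section ContinuedFraction.
Variables (R : realType) (alpha : R).
Local Notation x n := (cf_rem alpha n).
Local Notation a := (pq alpha).
Local Notation p n := (cf_p alpha n).
Local Notation q n := (cf_q alpha n).

Lemma cf_remS n : x n.+1 = gauss (x n).
Proof. by rewrite /cf_rem iterS. Qed.

Lemma cf_rem_invE n : (x n)^-1 = (a n.+1)%:~R + x n.+1.
Proof. by rewrite cf_remS -gauss_invE. Qed.

Lemma cf_rem_ge0_lt1 n : 0 <= alpha < 1 -> 0 <= x n < 1.
Proof. by case: n => [//|n] _; rewrite cf_remS gauss_ge0_lt1. Qed.

Hypotheses (alpha01 : 0 <= alpha < 1) (alpha_irr : irrational alpha).

Lemma cf_rem_irrational n : irrational (x n).
Proof. by elim: n => [//|n IH]; rewrite cf_remS; apply: irrational_gauss. Qed.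

Lemma pq_ge1 n : 1 <= a n.+1.
Proof.
have /andP[x_ge0 x_lt1] := cf_rem_ge0_lt1 n alpha01.
have x_gt0 : 0 < x n.
  by rewrite lt_def x_ge0 andbT; exact: irrational_neq0 (cf_rem_irrational n).
by rewrite /= floor_ge_int rmorph1 invf_ge1 // ltW.
Qed.

Lemma cf_q_ge n : 1 <= q n /\ n%:Z <= q n.
Proof. exact: conv_q_ge pq_ge1 n. Qed.

Lemma cf_convergent_eq n :
  alpha * ((q n.+1)%:~R + (q n)%:~R * x n.+1) = (p n.+1)%:~R + (p n)%:~R * x n.+1.
Proof.
elim: n => [|n IH].
  rewrite /cf_q /cf_p /= mulr1 addr0 mulr0 add0r rmorph0 rmorph1 mul1r mul0r addr0.
  by rewrite -gauss_invE mulfV //; exact: irrational_neq0.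
have xS_neq0 : x n.+1 != 0 := irrational_neq0 (cf_rem_irrational n.+1).
have aE : (a n.+2)%:~R = (x n.+1)^-1 - x n.+2 by rewrite cf_rem_invE addrK.
rewrite /cf_p /cf_q conv_pSS conv_qSS !intrD !intrM aE.
transitivity ((x n.+1)^-1 * (alpha * ((q n.+1)%:~R + (q n)%:~R * x n.+1))).
  by field.
by rewrite IH; field.
Qed.

Lemma cf_approx_eq n :
  `|(q n)%:~R * alpha - (p n)%:~R| * ((q n.+1)%:~R + (q n)%:~R * x n.+1) = 1.
Proof.
have [q_ge1 _] := cf_q_ge n; have [q1_ge1 _] := cf_q_ge n.+1.
have /andP[x_ge0 _] := cf_rem_ge0_lt1 n.+1 alpha01.
rewrite -[X in _ * X]ger0_norm; last first.
  by rewrite addr_ge0 ?mulr_ge0 // ler0z (le_trans _ q1_ge1, le_trans _ q_ge1).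
rewrite -normrM mulrBl -mulrA cf_convergent_eq.
have := congr1 (intr : int -> R) (conv_det (pq alpha) n).
rewrite rmorphB !rmorphM rmorphXn rmorphN1 /= -/(cf_p alpha _) -/(cf_q alpha _) => det.
have -> : (q n)%:~R * ((p n.+1)%:~R + (p n)%:~R * x n.+1)
    - (p n)%:~R * ((q n.+1)%:~R + (q n)%:~R * x n.+1)
  = - ((p n)%:~R * (q n.+1)%:~R - (p n.+1)%:~R * (q n)%:~R) :> R by ring.
by rewrite det normrN normrX normrN1 expr1n.
Qed.

Lemma cf_approx_le n : `|(q n)%:~R * alpha - (p n)%:~R| <= ((q n.+1)%:~R)^-1.
Proof.
have [q_ge1 _] := cf_q_ge n; have [q1_ge1 _] := cf_q_ge n.+1.
have /andP[x_ge0 _] := cf_rem_ge0_lt1 n.+1 alpha01.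
have q1_gt0 : 0 < (q n.+1)%:~R :> R by rewrite ltr0z (lt_le_trans _ q1_ge1).
have := cf_approx_eq n; set S := (_%:~R + _) => eS.
have S_ge : (q n.+1)%:~R <= S by rewrite lerDl mulr_ge0 // ler0z (le_trans _ q_ge1).
have S_gt0 : 0 < S := lt_le_trans q1_gt0 S_ge.
move/(congr1 ( *%R^~ S^-1)): eS; rewrite mulfK ?gt_eqF // mul1r => ->.
by rewrite lef_pV2 ?posrE.
Qed.

End ContinuedFraction.

Definition cf_nbhd_overlap (R : realType) (gamma tau alpha : R) (n : nat) : Prop :=
  (cf_p alpha n)%:~R / (cf_q alpha n)%:~R
    + gamma / ((cf_q alpha n)%:~R `^ (tau + 1))
  > (cf_p alpha n.+2)%:~R / (cf_q alpha n.+2)%:~R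
    - gamma / ((cf_q alpha n.+2)%:~R `^ (tau + 1)).

Lemma overlap_gap_lt (R : realFieldType) (g Q Q1 A P P2 : R) :
  0 < g -> 0 < Q -> 0 < A -> 0 < P -> P <= P2 -> 0 <= Q1 ->
  A / (Q * (A * Q1 + Q)) < g / (P * Q) + g / (P2 * (A * Q1 + Q)) ->
  P / g - Q1 < 2 * Q / A.
Proof.
move=> g_gt0 Q_gt0 A_gt0 P_gt0 P_le Q1_ge0; set Q2 := A * Q1 + Q => overlap.
have Q2_gt0 : 0 < Q2 by rewrite ltr_wpDl // mulr_ge0 // ltW.
have P2_gt0 : 0 < P2 := lt_le_trans P_gt0 P_le.
have AP_lt : A * P < g * Q2 + g * Q * (P / P2).
  have QQ2P_gt0 : 0 < Q * Q2 * P by rewrite !mulr_gt0.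
  move: overlap; rewrite -(ltr_pM2r QQ2P_gt0).
  have -> : A / (Q * Q2) * (Q * Q2 * P) = A * P by field; rewrite !gt_eqF.
  have -> // : (g / (P * Q) + g / (P2 * Q2)) * (Q * Q2 * P) = g * Q2 + g * Q * (P / P2).
  by field; rewrite !gt_eqF.
have P_ratio : g * Q * (P / P2) <= g * Q.
  apply: ler_piMr; first by rewrite mulr_ge0 // ltW.
  by rewrite ler_pdivrMr // mul1r.
rewrite ltrBlDr -(ltr_pM2r g_gt0) -(ltr_pM2r A_gt0) mulfVK ?gt_eqF //.
have -> : (2 * Q / A + Q1) * g * A = g * Q2 + g * Q by rewrite /Q2; field; rewrite gt_eqF.
by rewrite mulrC; lra.
Qed.

Section Diophantine.
Variables (R : realType) (gamma tau alpha : R).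
Hypotheses (gamma_gt0 : 0 < gamma) (alphaD : alpha \in Dgt gamma tau).
Local Notation a := (pq alpha).
Local Notation p n := (cf_p alpha n).
Local Notation q n := (cf_q alpha n).

Lemma Dgt_int (z w : int) : 1 <= z ->
  gamma / (z%:~R `^ tau) <= `|z%:~R * alpha - w%:~R|.
Proof.
move: alphaD; rewrite inE => -[_ Dq] z_ge1.
have z_ge0 : 0 <= z := le_trans ler01 z_ge1.
have := Dq `|z|%N w; rewrite natr_absz ger0_norm //; apply.
by rewrite absz_gt0 gt_eqF.
Qed.

Lemma Dgt_ge0_lt1 : 0 <= alpha < 1.
Proof. by move: alphaD; rewrite inE => -[/andP[/ltW -> ->] _]. Qed.

Lemma Dgt_irrational : irrational alpha.
Proof.
move=> r; apply/eqP => alphaE.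
have d_ge1 : 1 <= denq r by exact: denq_gt0.
have := Dgt_int (numq r) d_ge1; apply/negP; rewrite -ltNge.
rewrite alphaE /ratr mulrC divfK ?intr_eq0 ?denq_neq0 // subrr normr0.
by rewrite divr_gt0 // powR_gt0 // ltr0z denq_gt0.
Qed.

Lemma cf_q_ge_Dgt n : 1 <= q n /\ n%:Z <= q n.
Proof. exact: cf_q_ge Dgt_ge0_lt1 Dgt_irrational n. Qed.

Lemma cf_q_succ_le n : (q n.+1)%:~R <= (q n)%:~R `^ tau / gamma.
Proof.
have [q_ge1 _] := cf_q_ge_Dgt n; have [q1_ge1 _] := cf_q_ge_Dgt n.+1.
have q1_gt0 : 0 < (q n.+1)%:~R :> R by rewrite ltr0z (lt_le_trans _ q1_ge1).
have Qt_gt0 : 0 < (q n)%:~R `^ tau :> R by rewrite powR_gt0 // ltr0z (lt_le_trans _ q_ge1).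
have := le_trans (Dgt_int (p n) q_ge1) (cf_approx_le Dgt_ge0_lt1 Dgt_irrational n).
rewrite ler_pdivrMr // => /(ler_wpM2l (ltW q1_gt0)).
by rewrite mulrA mulfV ?gt_eqF // mul1r ler_pdivlMr // mulrC.
Qed.

Lemma cf_overlap_gap_lt n : 0 <= tau -> ~~ odd n -> cf_nbhd_overlap gamma tau alpha n ->
  (q n)%:~R `^ tau / gamma - (q n.+1)%:~R < 2 * (q n)%:~R / (a n.+2)%:~R.
Proof.
move=> tau_ge0 n_even; rewrite /cf_nbhd_overlap.
have [q_ge1 _] := cf_q_ge_Dgt n; have [q1_ge1 _] := cf_q_ge_Dgt n.+1.
have a_ge1 := pq_ge1 Dgt_ge0_lt1 Dgt_irrational n.+1.
have := congr1 (intr : int -> R) (conv_det a n).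
rewrite -signr_odd oddS n_even rmorphB !rmorphM /= expr1 rmorphN1.
rewrite /cf_p /cf_q !(conv_pSS, conv_qSS) -/(p _) -/(q _) -/(p _) -/(q _) !intrD !intrM.
set Q := (q n)%:~R; set Q1 := (q n.+1)%:~R; set A := (a n.+2)%:~R.
set P := (p n)%:~R; set P1 := (p n.+1)%:~R => det.
have Q_gt0 : 0 < Q by rewrite ltr0z (lt_le_trans _ q_ge1).
have Q1_gt0 : 0 < Q1 by rewrite ltr0z (lt_le_trans _ q1_ge1).
have A_gt0 : 0 < A by rewrite ltr0z (lt_le_trans _ a_ge1).
have Q2_ge : Q <= A * Q1 + Q by rewrite lerDr mulr_ge0 // ltW.
have Q2_gt0 : 0 < A * Q1 + Q := lt_le_trans Q_gt0 Q2_ge.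
have powRS y : 0 < y -> y `^ (tau + 1) = y `^ tau * y.
  by move=> y_gt0; rewrite powRD ?(gt_eqF y_gt0) ?implybT // powRr1 // ltW.
rewrite !powRS // => overlap.
apply: (overlap_gap_lt (P2 := (A * Q1 + Q) `^ tau)) => //.
- by rewrite powR_gt0.
- by rewrite ge0_ler_powR ?nnegrE ?(ltW Q_gt0) ?(ltW Q2_gt0).
- exact: ltW.
have -> : A / (Q * (A * Q1 + Q)) = (A * P1 + P) / (A * Q1 + Q) - P / Q.
  transitivity (A * (P1 * Q - P * Q1) / (Q * (A * Q1 + Q))).
    by rewrite (_ : P1 * Q - P * Q1 = 1) ?mulr1 //; lra.
  by field; rewrite !gt_eqF.
lra.
Qed.

End Diophantine.

Lemma nneseries_le_ub (R : realType) (u : nat -> R) (b : R) :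
  (forall n, 0 <= u n) -> (forall M, \sum_(0 <= n < M) u n <= b) ->
  (\sum_(n <oo) (u n)%:E <= b%:E)%E.
Proof.
move=> u_ge0 ub; apply: lime_le.
  by apply: is_cvg_nneseries => n _ _; rewrite lee_fin.
by apply: nearW => M; rewrite sumEFin lee_fin.
Qed.

Lemma powR_inv_gap (R : realType) (e Q : R) : 0 < e -> 1 < Q ->
  e * (Q `^ (1 + e))^-1 <= ((Q - 1) `^ e)^-1 - (Q `^ e)^-1.
Proof.
move=> e_gt0 Q_gt1.
have Q_gt0 : 0 < Q := lt_trans ltr01 Q_gt1.
have Q1_gt0 : 0 < Q - 1 by rewrite subr_gt0.
(* (Q - 1)^-e = Q^-e r^e, and r^e >= 1 + e ln r >= 1 + e / Q. *)
set r := Q / (Q - 1).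
have r_gt0 : 0 < r by rewrite divr_gt0.
have ln_r : Q^-1 <= ln r.
  have := @le_ln1Dx R (- Q^-1); rewrite ltrN2 invf_lt1 // => /(_ Q_gt1).
  have -> : 1 - Q^-1 = r^-1 by rewrite /r invf_div; field; rewrite gt_eqF.
  by rewrite lnV ?posrE // lerNl opprK.
have r_powR : 1 + e / Q <= r `^ e.
  rewrite /powR gt_eqF //; apply: le_trans (expR_ge1Dx _).
  by rewrite lerD2l ler_pM2l.
have QE : Q `^ e = (Q - 1) `^ e * r `^ e by rewrite -powRM ?ltW // /r mulrC divfK ?gt_eqF.
rewrite powRD ?(gt_eqF Q_gt0) ?implybT // powRr1 ?(ltW Q_gt0) // QE.
have B_gt0 : 0 < (Q - 1) `^ e by rewrite powR_gt0.
have s_gt0 : 0 < r `^ e by rewrite powR_gt0.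
rewrite -subr_ge0.
have -> : ((Q - 1) `^ e)^-1 - ((Q - 1) `^ e * r `^ e)^-1 - e * (Q * ((Q - 1) `^ e * r `^ e))^-1
   = (r `^ e - 1 - e / Q) / ((Q - 1) `^ e * r `^ e) by field; rewrite !gt_eqF.
by apply: divr_ge0; [lra | rewrite mulr_ge0 // ltW].
Qed.

Lemma sum_powR_inv_le (R : realType) (e : R) : 0 < e -> forall M : nat,
  \sum_(0 <= k < M) ((k.+2%:R : R) `^ (1 + e))^-1 <= e^-1.
Proof.
move=> e_gt0 M; rewrite -(ler_pM2l e_gt0) mulfV ?gt_eqF // mulr_sumr.
pose f k := - ((k.+1%:R : R) `^ e)^-1.
apply: (@le_trans _ _ (\sum_(0 <= k < M) (f k.+1 - f k))).
  apply: ler_sum_nat => k _; rewrite /f opprK [- _ + _]addrC.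
  have -> : (k.+1%:R : R) = k.+2%:R - 1 by rewrite -[in RHS]natr1 addrK.
  by apply: powR_inv_gap; rewrite ?ltr1n.
rewrite telescope_sumr // /f powR1 invr1 opprK gerDr oppr_le0.
by rewrite invr_ge0 powR_ge0.
Qed.

Local Open Scope classical_set_scope.

(* For [K, gamma > 0] and [N0 > 0]: [gamma] lies in [near_nat_set K d N0] iff
   [N <= K / gamma <= N + d] for some natural [N >= N0]. *)
Definition near_nat_set (R : realType) (K d : R) (N0 : nat) : set R :=
  \bigcup_m `[K / ((N0 + m)%:R + d), K / (N0 + m)%:R].

Lemma measurable_near_nat_set (R : realType) (K d : R) N0 :
  measurable (near_nat_set K d N0).
Proof. by apply: bigcupT_measurable => m; exact: measurable_itv. Qed.

Lemma lebesgue_measure_itv_le (R : realType) (K d N : R) : 0 < K -> 0 < d -> 1 < N ->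
  (lebesgue_measure `[(K / (N + d))%R, (K / N)%R] <= (K * d * ((N - 1)^-1 - N^-1))%:E)%E.
Proof.
move=> K_gt0 d_gt0 N_gt1.
have N_gt0 : 0 < N := lt_trans ltr01 N_gt1.
have N1_gt0 : 0 < N - 1 by rewrite subr_gt0.
have Nd_gt0 : 0 < N + d by rewrite addr_gt0.
have lenE : K / N - K / (N + d) = K * d * (N * (N + d))^-1 by field; rewrite !gt_eqF.
have boundE : K * d * ((N - 1)^-1 - N^-1) = K * d * (N * (N - 1))^-1.
  by field; rewrite !gt_eqF.
have bound_ge0 : 0 <= K * d * ((N - 1)^-1 - N^-1).
  by apply: ltW; rewrite boundE !mulr_gt0 // invr_gt0 mulr_gt0.
rewrite lebesgue_measure_itv /=; case: ifP => _; last by rewrite lee_fin.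
rewrite -EFinD lee_fin lenE boundE ler_pM2l ?mulr_gt0 // lef_pV2 ?posrE ?mulr_gt0 //.
by rewrite ler_pM2l //; lra.
Qed.

Lemma measure_near_nat_set (R : realType) (K d : R) N0 : 0 < K -> 0 < d -> (1 < N0)%N ->
  (lebesgue_measure (near_nat_set K d N0) <= (K * d / (N0%:R - 1))%:E)%E.
Proof.
move=> K_gt0 d_gt0 N0_gt1.
have N_gt1 m : 1 < (N0 + m)%:R :> R by rewrite ltr1n (leq_trans N0_gt1) ?leq_addr.
pose f m : R := - (K * d) / ((N0 + m)%:R - 1).
have fE m : f m.+1 - f m = K * d * (((N0 + m)%:R - 1)^-1 - (N0 + m)%:R^-1).
  by rewrite /f addnS -natr1 addrK; ring.
have f_incr m : 0 <= f m.+1 - f m.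
  have := N_gt1 m; set N := (N0 + m)%:R => N_gt1'.
  by rewrite fE mulr_ge0 ?mulr_ge0 ?subr_ge0 ?lef_pV2 ?posrE ?gerBl //; lra.
apply: (@le_trans _ _ (\sum_(m <oo) lebesgue_measure
    (`[(K / ((N0 + m)%:R + d))%R, (K / (N0 + m)%:R)%R] : set R))%E).
  by apply: measure_sigma_subadditive => //; exact: measurable_near_nat_set.
apply: (@le_trans _ _ (\sum_(m <oo) (f m.+1 - f m)%:E)%E).
  apply: lee_nneseries => [m _ _|m _]; first exact: measure_ge0.
  by rewrite fE; exact: lebesgue_measure_itv_le.
apply: nneseries_le_ub => // M.
rewrite telescope_sumr // /f addn0 !mulNr opprK gerDr oppr_le0.
by rewrite divr_ge0 ?mulr_ge0 ?subr_ge0 ?ltW ?N_gt1.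
Qed.

Section ExceptionalSet.
Variables (R : realType) (tau e : R).
Hypotheses (tau_ge1 : 1 <= tau) (e_gt0 : 0 < e).

Definition exc_set (Q : R) : set R :=
  near_nat_set (Q `^ tau) (Q `^ (1 + e))^-1 (Num.truncn (2 * Q `^ tau)).

Section Level.
Variable Q : R.
Hypothesis Q_ge2 : 2 <= Q.

Local Notation K := (Q `^ tau).
Local Notation d := (Q `^ (1 + e))^-1.

Let Q_ge1 : 1 <= Q. Proof. exact: le_trans (ler1n R 2) Q_ge2. Qed.
Let K_ge2 : 2 <= K. Proof. exact: le_trans Q_ge2 (le1r_powR Q_ge1 tau_ge1). Qed.
Let K_gt0 : 0 < K. Proof. exact: lt_le_trans (ltr0n R 2) K_ge2. Qed.
Let d_gt0 : 0 < d. Proof. by rewrite invr_gt0 powR_gt0 // (lt_le_trans ltr01 Q_ge1). Qed.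
Let d_le1 : d <= 1.
Proof.
rewrite invf_le1 ?powR_gt0 ?(lt_le_trans ltr01 Q_ge1) //.
by apply: le_trans Q_ge1 (le1r_powR Q_ge1 _); rewrite lerDl ltW.
Qed.

Let N0_gt1 : (1 < Num.truncn (2 * K))%N.
Proof.
by rewrite truncn_ge_nat ?mulr_ge0 ?(ltW K_gt0) // ler_peMr // (le_trans _ K_ge2) // ler1n.
Qed.

Lemma measure_exc_set : (lebesgue_measure (exc_set Q) <= d%:E)%E.
Proof.
apply: le_trans (measure_near_nat_set K_gt0 d_gt0 N0_gt1) _.
rewrite lee_fin mulrAC; apply: ler_piMl (ltW d_gt0) _.
rewrite ler_pdivrMr ?mul1r ?subr_gt0 ?ltr1n //.
have := truncnS_gt (2 * K); rewrite [X in _ < X]mulrSr.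
by move: (Num.truncn _)%:R K_ge2 => n; lra.
Qed.

Lemma mem_exc_set (gamma : R) (N : nat) : 0 < gamma < 2^-1 ->
  N%:R <= K / gamma < N%:R + d -> exc_set Q gamma.
Proof.
move=> /andP[g_gt0 g_lt] /andP[N_le N_gt].
have K_lt : 2 * K < K / gamma.
  by rewrite ltr_pdivlMr // mulrAC gtr_pMl // -ltr_pdivlMl // mulr1.
have N0_le : (Num.truncn (2 * K) <= N)%N.
  by rewrite truncn_le_nat [X in _ < X]mulrSr (lt_trans K_lt) // (lt_le_trans N_gt) // lerD2l.
have N_gt0 : 0 < N%:R :> R by rewrite ltr0n (leq_trans _ N0_le) // ltnW.
rewrite ler_pdivlMr // in N_le; rewrite ltr_pdivrMr // in N_gt.
exists (N - Num.truncn (2 * K))%N => //; rewrite subnKC //= in_itv /=.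
rewrite ler_pdivrMr ?ler_pdivlMr ?addr_gt0 //.
by rewrite mulrC (ltW N_gt) mulrC.
Qed.

End Level.

Lemma negligible_lim_sup_exc_set :
  (@lebesgue_measure R).-negligible (lim_sup_set (fun k => exc_set k.+2%:R)).
Proof.
have exc_meas k : measurable (exc_set k.+2%:R) by exact: measurable_near_nat_set.
exists (lim_sup_set (fun k => exc_set k.+2%:R)); split => //.
  by apply: bigcapT_measurable => n; apply: bigcup_measurable => k _; exact: exc_meas.
apply: lim_sup_set_cvg0 => //.
apply: le_lt_trans (lee_nneseries (v := fun k => ((k.+2%:R `^ (1 + e))^-1)%:E) _ _) _.
- by move=> k _ _; exact: measure_ge0.
- by move=> k _; apply: measure_exc_set; rewrite ler_nat.
apply: le_lt_trans (nneseries_le_ub _ (sum_powR_inv_le e_gt0)) (ltry _).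
by move=> k; rewrite invr_ge0 powR_ge0.
Qed.

End ExceptionalSet.

Lemma not_lim_sup_setP T (F : (set T)^nat) (x : T) :
  ~ lim_sup_set F x -> exists M, forall k, (M <= k)%N -> ~ F k x.
Proof.
move=> notF; apply: contrapT => noM; apply: notF => M _.
apply: contrapT => notFM; apply: noM; exists M => k Mk Fk.
by apply: notFM; exists k.
Qed.

Section ExceptionalBound.
Variables (R : realType) (gamma tau alpha : R).
Hypotheses (gamma_gt0 : 0 < gamma) (gamma_lt : gamma < 2^-1) (tau_ge1 : 1 <= tau).
Hypothesis alphaD : alpha \in Dgt gamma tau.
Local Notation a := (pq alpha).
Local Notation q n := (cf_q alpha n).

Lemma pq_le_of_not_exc_set (e : R) n : 0 < e -> ~~ odd n ->
  cf_nbhd_overlap gamma tau alpha n -> 2 <= q n ->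
  ~ exc_set tau e (q n)%:~R gamma -> (a n.+2)%:~R <= 2 * (q n)%:~R `^ (2 + e).
Proof.
move=> e_gt0 n_even overlap q_ge2 not_exc; rewrite leNgt; apply/negP => a_gt.
have tau_ge0 : 0 <= tau := le_trans ler01 tau_ge1.
have gap := cf_overlap_gap_lt gamma_gt0 alphaD tau_ge0 n_even overlap.
have [q1_ge1 _] := cf_q_ge_Dgt gamma_gt0 alphaD n.+1.
set Q := (q n)%:~R in a_gt gap not_exc; set A := (a n.+2)%:~R in a_gt gap.
have Q_ge2 : 2 <= Q by rewrite -[2]/(2%:~R) ler_int.
have Q_gt0 : 0 < Q := lt_le_trans (ltr0n R 2) Q_ge2.
have P_gt0 : 0 < Q `^ (1 + e) by rewrite powR_gt0.
have A_gt0 : 0 < A by apply: le_lt_trans a_gt; rewrite mulr_ge0 ?powR_ge0.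
have QE : Q `^ (2 + e) = Q * Q `^ (1 + e).
  have -> : 2 + e = 1 + (1 + e) by lra.
  by rewrite powRD ?(gt_eqF Q_gt0) ?implybT // powRr1 // ltW.
have gap_lt : 2 * Q / A < (Q `^ (1 + e))^-1.
  rewrite ltr_pdivrMr // ltr_pdivlMl //; apply: le_lt_trans a_gt.
  by rewrite QE mulrC -mulrA.
apply: not_exc; apply: (@mem_exc_set R tau e tau_ge1 e_gt0 Q Q_ge2 gamma `|q n.+1|%N).
  by rewrite gamma_gt0 gamma_lt.
rewrite natr_absz ger0_norm ?(le_trans _ q1_ge1) // cf_q_succ_le //=.
by rewrite -ltrBlDl (lt_trans gap gap_lt).
Qed.

Lemma pq_le_powR_of_not_exc_set (e : R) (M : nat) : 0 < e ->
  (forall k, (M <= k)%N -> ~ exc_set tau e k.+2%:R gamma) ->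
  exists C : R, 0 < C /\ forall n, ~~ odd n -> cf_nbhd_overlap gamma tau alpha n ->
    (a n.+2)%:~R <= C * (q n)%:~R `^ (2 + e).
Proof.
move=> e_gt0 not_exc.
pose S := \sum_(i < M.+2) `|(a i.+2)%:~R : R|.
have S_ge0 : 0 <= S by rewrite sumr_ge0.
exists (2 + S); split => [|n n_even overlap]; first by rewrite ltr_wpDr.
have [q_ge1 q_ge_n] := cf_q_ge_Dgt gamma_gt0 alphaD n.
have Qe_ge1 : 1 <= (q n)%:~R `^ (2 + e) :> R.
  rewrite -[leLHS](powRr0 (q n)%:~R) ler_powR ?ler1z //.
  by rewrite addr_ge0 ?ltW.
have [q_lt|q_ge] := ltP (q n) M.+2%:Z.
  have n_lt : (n < M.+2)%N by rewrite -ltz_nat (le_lt_trans q_ge_n).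
  have a_le : (a n.+2)%:~R <= S.
    by apply: le_trans (ler_norm _) _; rewrite /S (bigD1 (Ordinal n_lt)) // lerDl sumr_ge0.
  apply: le_trans a_le (le_trans _ (ler_peMr _ Qe_ge1)); last by rewrite addr_ge0.
  by rewrite lerDr.
have q_ge0 : 0 <= q n := le_trans ler01 q_ge1.
have qM : (M.+2 <= `|q n|)%N by rewrite -lez_nat gez0_abs.
set k := (`|q n| - 2)%N.
have qE : k.+2%:R = (q n)%:~R :> R.
  by rewrite /k -addn2 subnK ?natr_absz ?ger0_norm // (leq_trans _ qM).
have k_ge : (M <= k)%N by rewrite /k leq_subRL ?(leq_trans _ qM) // addnC addn2.
apply: le_trans (pq_le_of_not_exc_set e_gt0 n_even overlap _ _) _.
- by apply: le_trans q_ge; rewrite lez_nat.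
- by rewrite -qE; exact: not_exc.
by rewrite ler_wpM2r ?powR_ge0 // lerDl.
Qed.

End ExceptionalBound.

Theorem lemma8 (R : realType) (tau : R) (htau : 3 < tau) :
  (@lebesgue_measure R).-negligible
    [set gamma : R | 0 < gamma < 2^-1 /\
      ~ (forall alpha : R, alpha \in Dgt gamma tau ->
          (forall N : nat, exists n : nat, (N <= n)%N /\ ~~ odd n /\
             (cf_p alpha n)%:~R / (cf_q alpha n)%:~R
               + gamma / ((cf_q alpha n)%:~R `^ (tau + 1))
             > (cf_p alpha n.+2)%:~R / (cf_q alpha n.+2)%:~R
               - gamma / ((cf_q alpha n.+2)%:~R `^ (tau + 1))) ->
          forall eps : R, 0 < eps -> exists C : R, 0 < C /\
            forall n : nat, ~~ odd n ->
             (cf_p alpha n)%:~R / (cf_q alpha n)%:~R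
               + gamma / ((cf_q alpha n)%:~R `^ (tau + 1))
             > (cf_p alpha n.+2)%:~R / (cf_q alpha n.+2)%:~R
               - gamma / ((cf_q alpha n.+2)%:~R `^ (tau + 1)) ->
             (pq alpha n.+2)%:~R <= C * ((cf_q alpha n)%:~R `^ (2 + eps)))].
Proof.
have tau_ge1 : 1 <= tau by lra.
pose exc j := lim_sup_set (fun k => exc_set tau j.+1%:R^-1 k.+2%:R).
have exc_negligible : (@lebesgue_measure R).-negligible (\bigcup_j exc j).
  apply: negligible_bigcup => j.
  by apply: (negligible_lim_sup_exc_set tau_ge1); rewrite invr_gt0.
apply: negligibleS exc_negligible.
move=> gamma [/andP[g_gt0 g_lt] bad]; apply: contrapT => not_exc; apply: bad.
(* The bound holds for every even n with overlapping neighbourhoods. *)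
move=> alpha alphaD _ eps eps_gt0.
pose j := Num.truncn eps^-1; pose e : R := j.+1%:R^-1.
have e_gt0 : 0 < e by rewrite invr_gt0.
have e_lt : e < eps by rewrite -[eps]invrK ltf_pV2 ?posrE ?invr_gt0 // truncnS_gt.
have [M not_exc_M] : exists M, forall k, (M <= k)%N -> ~ exc_set tau e k.+2%:R gamma.
  apply: (@not_lim_sup_setP _ (fun k => exc_set tau e k.+2%:R)) => exc_j.
  by apply: not_exc; exists j.
have [C [C_gt0 C_bound]] := pq_le_powR_of_not_exc_set g_gt0 g_lt tau_ge1 alphaD e_gt0 not_exc_M.
exists C; split => // n n_even overlap.
apply: le_trans (C_bound n n_even overlap) _.
have [q_ge1 _] := cf_q_ge_Dgt g_gt0 alphaD n.
rewrite ler_pM2l //; apply: ler_powR; first by rewrite ler1z.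
by rewrite lerD2l ltW.
Qed.
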